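(* Let $\mathcal R_Q$ be a nonempty set of rows that has the consecutive-ones property and whose overlap graph is connected, let $(c_1,\ldots,c_m)$ be a consecutive-ones ordering of $\mathcal R_Q$, and let $Z$ be a row not in $\mathcal R_Q$. Then $\mathcal R_Q\cup\{Z\}$ fails to have the consecutive-ones property if and only if one of the following holds: (1) there is a 1-0-1 configuration for $Z$; (2) there is a 0-1-0 configuration for $Z$ and $Z$ contains a column of the unconstrained Venn class of $\mathcal R_Q$.
   Context: Each row is identified with the set of columns in which it has a 1. A consecutive-ones ordering of a set of rows is an ordering of all columns in which each of these rows occupies consecutive columns; the set has the consecutive-ones property if one exists. Two rows overlap if they intersect and neither is a subset of the other; the overlap graph of a set of rows joins overlapping rows. Venn classes of $\mathcal R_Q$: two columns are in the same Venn class if they belong to exactly the same members of $\mathcal R_Q$; the unconstrained Venn class consists of the columns in no member of $\mathcal R_Q$, and all other Venn classes are constrained. A 1-0-1 configuration for $Z$ is a triple of columns $(c_h,c_i,c_j)$ with $h<i<j$ lying in three distinct constrained Venn classes of $\mathcal R_Q$ such that $c_h\in Z$, $c_i\notin Z$, $c_j\in Z$. A 0-1-0 configuration is defined identically except $c_h\notin Z$, $c_i\in Z$, $c_j\notin Z$. *)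

(* Columns form a finite type C; a row is a set of columns. *)
From mathcomp Require Import all_boot.
Set Implicit Arguments. Unset Strict Implicit. Unset Printing Implicit Defensive.

Section C1P.
Variable C : finType.

Definition column_ordering (s : seq C) : Prop := uniq s /\ forall c : C, c \in s.

Definition consecutive_in (s : seq C) (X : {set C}) : Prop :=
  forall x0 : C, forall h i j : nat, h < i -> i < j -> j < size s ->
    nth x0 s h \in X -> nth x0 s j \in X -> nth x0 s i \in X.

Definition c1p_ordering (R : {set {set C}}) (s : seq C) : Prop :=
  column_ordering s /\ forall X, X \in R -> consecutive_in s X.

Definition has_C1P (R : {set {set C}}) : Prop := exists s, c1p_ordering R s.

Definition overlap (A B : {set C}) : bool :=
  [&& A :&: B != set0, ~~ (A \subset B) & ~~ (B \subset A)].

Definition overlap_rel (R : {set {set C}}) : rel {set C} :=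
  fun A B => [&& A \in R, B \in R & overlap A B].

Definition overlap_connected (R : {set {set C}}) : Prop :=
  forall A B, A \in R -> B \in R -> connect (overlap_rel R) A B.

Definition same_venn (R : {set {set C}}) (c d : C) : Prop :=
  forall X, X \in R -> (c \in X) = (d \in X).

Definition unconstrained (R : {set {set C}}) (c : C) : Prop :=
  forall X, X \in R -> c \notin X.

Definition constrained (R : {set {set C}}) (c : C) : Prop :=
  exists2 X, X \in R & c \in X.

Definition venn_triple (R : {set {set C}}) (s : seq C) (x0 : C) (h i j : nat) : Prop :=
  [/\ h < i, i < j, j < size s,
      [/\ constrained R (nth x0 s h), constrained R (nth x0 s i)
        & constrained R (nth x0 s j)]
    & [/\ ~ same_venn R (nth x0 s h) (nth x0 s i),
          ~ same_venn R (nth x0 s i) (nth x0 s j)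
        & ~ same_venn R (nth x0 s h) (nth x0 s j)]].

Definition config101 (R : {set {set C}}) (s : seq C) (Z : {set C}) : Prop :=
  exists x0 h i j, venn_triple R s x0 h i j /\
    [/\ nth x0 s h \in Z, nth x0 s i \notin Z & nth x0 s j \in Z].

Definition config010 (R : {set {set C}}) (s : seq C) (Z : {set C}) : Prop :=
  exists x0 h i j, venn_triple R s x0 h i j /\
    [/\ nth x0 s h \notin Z, nth x0 s i \in Z & nth x0 s j \notin Z].

End C1P.

From mathcomp Require Import all_boot zify.
From Stdlib Require Import Classical.
Set Implicit Arguments. Unset Strict Implicit. Unset Printing Implicit Defensive.

(* The proof rests on two facts about R.
   - Rigidity (c1p_orientation, c1p_between_rigid): any two consecutive-ones
     orderings of R either agree or disagree on the relative order of every
     pair of constrained columns from distinct Venn classes.  The orientation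
     of the private parts of two overlapping rows is an invariant of the
     ordering; it is shared by overlap edges meeting at a row and hence, by
     connectivity, by all edges; every pair of distinct classes is separated
     by a row reachable in the overlap graph.
   - Shape of one ordering: the constrained columns form a block
     (unconstrained_not_between) and each Venn class is contiguous
     (venn_class_contiguous).
   Necessity: in an ordering of R and Z, rigidity carries a 1-0-1
   configuration of s over, contradicting consecutiveness of Z, and a 0-1-0
   configuration traps the unconstrained column of Z between constrained ones.
   Sufficiency: a stable sort of s by an explicit key (zkey), which places Z
   around its leftmost and rightmost constrained columns a and b, is a
   consecutive-ones ordering of R and Z (sort_by_key_c1p); the absence of
   both configurations is exactly what makes the key admissible. *)

Section VennClasses.
Variables (C : finType) (R : {set {set C}}).

Definition constrainedb (c : C) : bool := [exists X in R, c \in X].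
Definition same_vennb (c d : C) : bool := [forall X in R, (c \in X) == (d \in X)].

Lemma constrainedP c : reflect (constrained R c) (constrainedb c).
Proof.
apply: (iffP existsP) => [[X /andP[RX cX]]|[X RX cX]]; first by exists X.
by exists X; rewrite RX cX.
Qed.

Lemma constrained_row X c : X \in R -> c \in X -> constrainedb c.
Proof. by move=> RX Xc; apply/constrainedP; exists X. Qed.

Lemma unconstrainedP c : unconstrained R c <-> ~~ constrainedb c.
Proof.
split => [cU|/constrainedP cU X RX]; first by apply/constrainedP => -[X RX]; apply/negP/cU.
by apply/negP => cX; apply: cU; exists X.
Qed.

Lemma same_vennP c d : reflect (same_venn R c d) (same_vennb c d).
Proof.
apply: (iffP forallP) => [cd X RX|cd X]; first by have /implyP/(_ RX)/eqP := cd X.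
by apply/implyP => RX; rewrite (cd X RX).
Qed.

Lemma same_venn_refl c : same_vennb c c.
Proof. exact/same_vennP. Qed.

Lemma same_venn_sym c d : same_vennb c d = same_vennb d c.
Proof. by apply/same_vennP/same_vennP => cd X RX; rewrite cd. Qed.

Lemma same_venn_trans c d e : same_vennb c d -> same_vennb d e -> same_vennb c e.
Proof.
by move=> /same_vennP cd /same_vennP de; apply/same_vennP => X RX; rewrite cd ?de.
Qed.

Lemma same_venn_join c d e : same_vennb c e -> same_vennb d e -> same_vennb c d.
Proof. by rewrite [same_vennb d e]same_venn_sym; apply: same_venn_trans. Qed.

Lemma same_venn_constrained c d : same_vennb c d -> constrainedb d -> constrainedb c.
Proof.
by move=> /same_vennP cd /constrainedP[X RX Xd]; apply/constrainedP; exists X; rewrite ?cd.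
Qed.

Lemma same_venn_mem c d X : same_vennb c d -> X \in R -> (c \in X) = (d \in X).
Proof. by move=> /same_vennP cd RX; apply: cd. Qed.

Lemma venn_separator c d :
  ~~ same_vennb c d -> exists2 X, X \in R & (c \in X) = (d \notin X).
Proof.
case/forallPn => X; rewrite negb_imply => /andP[RX cdX]; exists X => //.
by move: cdX; case: (c \in X); case: (d \in X).
Qed.

End VennClasses.

Section Betweenness.

Definition between (p q r : nat) : bool := (p < q < r) || (r < q < p).

Lemma ltn_anti_neq p q : p != q -> (p < q) = ~~ (q < p).
Proof. lia. Qed.

Lemma between_of_not_between p q r : p != q -> q != r -> p != r ->
  ~~ between q p r -> ~~ between p r q -> between p q r.
Proof. rewrite /between; lia. Qed.

Lemma between_lt_same p q r : between p q r -> (q < r) = (p < q).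
Proof. rewrite /between; lia. Qed.

Lemma between_lt_right p q r : between p q r -> (q < r) = (p < r).
Proof. rewrite /between; lia. Qed.

Lemma between_same_side p p' q r : between p q r -> between p' q r -> (p < r) = (p' < r).
Proof. rewrite /between; lia. Qed.

Lemma between_pivot p p' q r r' :
  between p q r -> between p' q r -> between p' q r' -> (p < r) = (p' < r').
Proof. rewrite /between; lia. Qed.

Lemma between_crossed p q a c : between a p q -> between c q p -> (a < q) = ~~ (c < p).
Proof. rewrite /between; lia. Qed.

Lemma not_between_lt p q r : ~~ between p q r -> q != p -> q != r -> (p < q) = (r < q).
Proof. rewrite /between; lia. Qed.

Lemma not_between_trans x u m z :
  ~~ between m u z -> ~~ between x u m -> u != m -> ~~ between x u z.
Proof. rewrite /between; lia. Qed.

Lemma between_squeeze x y z u : between x y z ->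
  ~~ between u x y -> ~~ between u z y -> u != x -> u != z -> between x u z.
Proof. rewrite /between; lia. Qed.

Lemma between_monotone (f : bool) p q r :
  (p < q) = f -> (q < r) = f -> p != q -> q != r -> between p q r.
Proof. by rewrite /between; case: f; lia. Qed.

End Betweenness.

Section Positions.
Variable C : finType.

Lemma index_inj (s : seq C) a b : column_ordering s -> index a s = index b s -> a = b.
Proof. by move=> [_ sC] ab; rewrite -(nth_index a (sC a)) ab nth_index. Qed.

Lemma index_neq (s : seq C) a b : column_ordering s -> a != b -> index a s != index b s.
Proof. by move=> sO; apply: contra => /eqP/(index_inj sO)/eqP. Qed.

Lemma venn_index_neq R (s : seq C) x y :
  column_ordering s -> ~~ same_vennb R x y -> index x s != index y s.
Proof.
by move=> sO xy; apply: index_neq sO _; apply: contraNneq xy => ->; apply: same_venn_refl.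
Qed.

Lemma consecutive_between (s : seq C) X a b c :
  column_ordering s -> consecutive_in s X -> a \in X -> b \in X ->
  between (index a s) (index c s) (index b s) -> c \in X.
Proof.
move=> [_ sC] sX aX bX /orP[/andP[ac cb]|/andP[bc ca]].
- by have := sX a _ _ _ ac cb; rewrite index_mem sC !nth_index //; apply.
- by have := sX a _ _ _ bc ca; rewrite index_mem sC !nth_index //; apply.
Qed.

Lemma c1p_consecutive R (s : seq C) X :
  c1p_ordering R s -> X \in R -> consecutive_in s X.
Proof. by case=> _; apply. Qed.

End Positions.

Section Overlaps.
Variable C : finType.

Lemma overlap_witnesses (A B : {set C}) : overlap A B ->
  [/\ exists m, m \in A :&: B, exists a, a \in A :\: B & exists b, b \in B :\: A].
Proof.
case/and3P => /set0Pn[m Am] /subsetPn[a Aa Ba] /subsetPn[b Bb Ab].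
by split; [exists m | exists a | exists b]; rewrite // inE ?Aa ?Ba ?Ab ?Bb.
Qed.

Lemma overlapC (A B : {set C}) : overlap A B = overlap B A.
Proof. by rewrite /overlap setIC; congr (_ && _); apply: andbC. Qed.

Lemma overlap_between (s : seq C) (A B : {set C}) a m b :
  column_ordering s -> consecutive_in s A -> consecutive_in s B ->
  a \in A :\: B -> m \in A :&: B -> b \in B :\: A ->
  between (index a s) (index m s) (index b s).
Proof.
rewrite !inE => sO sA sB /andP[Ba Aa] /andP[Am Bm] /andP[Ab Bb].
have am : a != m by apply: contraNneq Ba => ->.
have ab : a != b by apply: contraNneq Ba => ->.
have mb : m != b by apply: contraNneq Ab => <-.
apply: between_of_not_between; rewrite ?(index_neq sO) //.
  by apply: contraNN Ba => /(consecutive_between sO sB Bm Bb).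
by apply: contraNN Ab => /(consecutive_between sO sA Aa Am).
Qed.

End Overlaps.

Section Rigidity.
Variables (C : finType) (R : {set {set C}}) (s t : seq C).
Hypotheses (s_c1p : c1p_ordering R s) (t_c1p : c1p_ordering R t).

Lemma c1p_overlap_between u A B a m b : c1p_ordering R u -> A \in R -> B \in R ->
  a \in A :\: B -> m \in A :&: B -> b \in B :\: A ->
  between (index a u) (index m u) (index b u).
Proof.
by move=> uC RA RB; apply: overlap_between uC.1 (c1p_consecutive uC RA) (c1p_consecutive uC RB).
Qed.

Definition agree (a b : C) : bool :=
  (index a s < index b s) == (index a t < index b t).

Lemma agree_transfer a b c d :
  (forall u, c1p_ordering R u -> (index a u < index b u) = (index c u < index d u)) ->
  agree a b = agree c d.
Proof. by move=> E; rewrite /agree (E s) // (E t). Qed.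

Lemma agree_sym a b : a != b -> agree a b = agree b a.
Proof.
move=> ab; rewrite /agree (ltn_anti_neq (index_neq s_c1p.1 ab)).
by rewrite (ltn_anti_neq (index_neq t_c1p.1 ab)); case: (_ < _); case: (_ < _).
Qed.

Lemma agree_private A B a b a' b' : A \in R -> B \in R -> overlap A B ->
  a \in A :\: B -> b \in B :\: A -> a' \in A :\: B -> b' \in B :\: A ->
  agree a b = agree a' b'.
Proof.
move=> RA RB /overlap_witnesses[[m ABm] _ _] a_ b_ a'_ b'_.
apply: agree_transfer => u uC; apply: (@between_pivot _ _ (index m u)).
- exact: c1p_overlap_between a_ ABm b_.
- exact: c1p_overlap_between a'_ ABm b_.
- exact: c1p_overlap_between a'_ ABm b'_.
Qed.

Lemma agree_shared_nested A B D a b c d : A \in R -> B \in R -> D \in R ->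
  overlap A B -> A :&: B \subset D ->
  a \in A :\: B -> b \in B :\: A -> c \in D :\: B -> d \in B :\: D ->
  agree a b = agree c d.
Proof.
move=> RA RB RD AB /subsetP AB_D a_ b_ c_ d_.
have [[m ABm] _ _] := overlap_witnesses AB.
have DBm : m \in D :&: B by rewrite inE AB_D //; move: ABm; rewrite inE => /andP[].
have d'_ : d \in B :\: A.
  move: d_; rewrite !inE => /andP[Dd Bd]; rewrite Bd andbT.
  by apply: contra Dd => Ad; apply: AB_D; rewrite inE Ad.
rewrite (agree_private RA RB AB a_ b_ a_ d'_); apply: agree_transfer => u uC.
apply: (@between_same_side _ _ (index m u)).
- exact: c1p_overlap_between a_ ABm d'_.
- exact: c1p_overlap_between c_ DBm d_.
Qed.

Lemma agree_shared A B D a b c d : A \in R -> B \in R -> D \in R ->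
  overlap A B -> overlap D B ->
  a \in A :\: B -> b \in B :\: A -> c \in D :\: B -> d \in B :\: D ->
  agree a b = agree c d.
Proof.
move=> RA RB RD AB DB a_ b_ c_ d_.
have [AB_D|/subsetPn[p ABp Dp]] := boolP (A :&: B \subset D).
  exact: (agree_shared_nested RA RB RD AB AB_D).
have [DB_A|/subsetPn[q DBq Aq]] := boolP (D :&: B \subset A).
  by symmetry; apply: (agree_shared_nested RD RB RA DB DB_A).
have q_ : q \in B :\: A by move: DBq; rewrite !inE Aq => /andP[].
have p_ : p \in B :\: D by move: ABp; rewrite !inE Dp => /andP[].
rewrite (agree_private RA RB AB a_ b_ a_ q_) (agree_private RD RB DB c_ d_ c_ p_).
have cross u : c1p_ordering R u ->
    (index a u < index q u) = ~~ (index c u < index p u).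
  move=> uC; apply: between_crossed.
  - exact: c1p_overlap_between a_ ABp q_.
  - exact: c1p_overlap_between c_ DBq p_.
by rewrite /agree (cross s) // (cross t) //; case: (_ < _); case: (_ < _).
Qed.

Definition oriented (f : bool) (A B : {set C}) : Prop :=
  forall a b, a \in A :\: B -> b \in B :\: A -> agree a b = f.

Lemma oriented_step f A B D : overlap_rel R A B -> overlap_rel R B D ->
  oriented f A B -> oriented f B D.
Proof.
move=> /and3P[RA RB AB] /and3P[_ RD BD] orAB b d b_ d_.
have [_ [a a_] [b' b'_]] := overlap_witnesses AB.
have bd : b != d by case/setDP: b_ => Bb _; apply: contraTneq d_ => <-; rewrite inE Bb.
rewrite (agree_sym bd) -(orAB a b' a_ b'_).
by symmetry; rewrite overlapC in BD; apply: (agree_shared RA RB RD AB BD).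
Qed.

Lemma oriented_path f A B p : overlap_rel R A B -> oriented f A B ->
  path (overlap_rel R) B p -> forall D, overlap_rel R (last B p) D -> oriented f (last B p) D.
Proof.
elim: p A B => [|E p IH] A B AB orAB /=; first by move=> _ D BD; apply: oriented_step AB BD orAB.
by case/andP=> BE pE D lD; apply: (IH B E BE _ pE D lD); apply: oriented_step AB BE orAB.
Qed.

Lemma edge_orientation : overlap_connected R ->
  exists f, forall A B, overlap_rel R A B -> oriented f A B.
Proof.
move=> Rconn.
have [/existsP[A /existsP[B AB]]|noEdge] := boolP [exists A, exists B, overlap_rel R A B].
  have /and3P[RA RB ovAB] := AB; have [_ [a a_] [b b_]] := overlap_witnesses ovAB.
  have orAB : oriented (agree a b) A B.
    by move=> a' b' a'_ b'_; apply: agree_private a'_ b'_ a_ b_.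
  exists (agree a b) => D E DE.
  have /connectP[p Bp Dlast] := Rconn B D RB (proj1 (andP DE)).
  by rewrite Dlast in DE *; apply: oriented_path AB orAB Bp E DE.
exists true => A B AB; case/negP: noEdge.
by apply/existsP; exists A; apply/existsP; exists B.
Qed.

Lemma agree_along_path f : (forall A B, overlap_rel R A B -> oriented f A B) ->
  forall p D x y, D \in R -> path (overlap_rel R) D p ->
  x \in D -> y \in last D p -> y \notin D -> agree x y = f.
Proof.
move=> orient; elim=> [|E p IH] D x y RD /=; first by move=> _ _ ->.
case/andP=> DE pE Dx yE Dy; have /and3P[_ RE /overlap_witnesses[[m DEm] [a a_] _]] := DE.
have [Ey|Ey] := boolP (y \in E).
  have y_ : y \in E :\: D by rewrite inE Dy.
  have [Ex|Ex] := boolP (x \in E); last by apply: (orient D E DE); rewrite // inE Ex.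
  have DEx : x \in D :&: E by rewrite inE Dx.
  rewrite -(orient _ _ DE a y a_ y_); apply: agree_transfer => u uC.
  exact/between_lt_right/(c1p_overlap_between uC RD RE a_ DEx y_).
have [Dm Em] : m \in D /\ m \in E by apply/andP; rewrite -in_setI.
rewrite -(IH E m y RE pE Em yE Ey); apply: agree_transfer => u uC.
have yx : y != x by apply: contraNneq Dy => ->.
have ym : y != m by apply: contraNneq Dy => ->.
apply: not_between_lt; [|exact: index_neq uC.1 yx|exact: index_neq uC.1 ym].
by apply: contraNN Dy => /(consecutive_between uC.1 (c1p_consecutive uC RD) Dx Dm).
Qed.

Lemma c1p_orientation : overlap_connected R -> exists f, forall x y,
  constrainedb R x -> constrainedb R y -> ~~ same_vennb R x y -> agree x y = f.
Proof.
move=> Rconn; have [f orient] := edge_orientation Rconn; exists f.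
have across X x y : X \in R -> x \in X -> y \notin X -> constrainedb R y -> agree x y = f.
  move=> RX Xx Xy /constrainedP[E RE Ey].
  have /connectP[p Xp Elast] := Rconn X E RX RE.
  by apply: (agree_along_path orient RX Xp) => //; rewrite -Elast.
move=> x y Cx Cy /venn_separator[X RX xXy].
have [Xx|Xx] := boolP (x \in X); first by apply: (across X); rewrite -?xXy.
have Xy : y \in X by rewrite -[y \in X]negbK -xXy.
have xy : x != y by apply: contraNneq Xx => ->.
by rewrite agree_sym //; apply: (across X).
Qed.

End Rigidity.

(* With a connected overlap graph, two distinct constrained Venn classes are
   accompanied by a third one: the first overlap edge on a path between rows
   containing them exhibits three distinct classes. *)
Lemma third_venn_class (C : finType) (R : {set {set C}}) a b :
  overlap_connected R -> constrainedb R a -> constrainedb R b -> ~~ same_vennb R a b ->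
  exists w, [/\ constrainedb R w, ~~ same_vennb R w a & ~~ same_vennb R w b].
Proof.
move=> Rconn Ca Cb /venn_separator[X RX abX].
wlog [Xa Xb] : a b Ca Cb abX / a \in X /\ b \notin X.
  move=> sym; have [Xa|Xa] := boolP (a \in X); first by apply: sym; rewrite -?abX.
  have Xb : b \in X by rewrite -[b \in X]negbK -abX.
  have baX : (b \in X) = (a \notin X) by rewrite Xb Xa.
  by have [w [Cw wb wa]] := sym b a Cb Ca baX (conj Xb Xa); exists w.
have /constrainedP[E RE Eb] := Cb.
have /connectP[[|Y p] /= Xp Elast] := Rconn X E RX RE; first by move: Xb; rewrite -Elast Eb.
have /and3P[_ RY XY] := proj1 (andP Xp).
have [[m XYm] [p1 p1_] [q q_]] := overlap_witnesses XY.
move: XYm p1_ q_; rewrite !inE => /andP[Xm Ym] /andP[Yp1 Xp1] /andP[Xq Yq].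
have p1m : ~~ same_vennb R p1 m by apply: contraNN Yp1 => /same_venn_mem ->.
have mq : ~~ same_vennb R m q by apply: contraNN Xq => /same_venn_mem <-.
have p1q : ~~ same_vennb R p1 q by apply: contraNN Xq => /same_venn_mem <-.
have [Cp1 Cm Cq] := And3 (constrained_row RX Xp1) (constrained_row RX Xm) (constrained_row RY Yq).
case E1: (~~ same_vennb R p1 a && ~~ same_vennb R p1 b); first by case/andP: E1; exists p1.
case E2: (~~ same_vennb R m a && ~~ same_vennb R m b); first by case/andP: E2; exists m.
case E3: (~~ same_vennb R q a && ~~ same_vennb R q b); first by case/andP: E3; exists q.
(* Otherwise two of p1, m, q share the class of a or of b. *)
move: E1 E2 E3; rewrite -!negb_or => /negbFE/orP[]H1 /negbFE/orP[]H2 /negbFE/orP[]H3;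
  first [ by rewrite (same_venn_join H1 H2) in p1m | by rewrite (same_venn_join H1 H3) in p1q
        | by rewrite (same_venn_join H2 H3) in mq ].
Qed.

Section OneOrdering.
Variables (C : finType) (R : {set {set C}}) (s : seq C).
Hypotheses (s_c1p : c1p_ordering R s) (R_conn : overlap_connected R).

Let s_ord : column_ordering s := s_c1p.1.

Lemma unconstrained_not_between_path p D x z u : D \in R ->
  path (overlap_rel R) D p -> x \in D -> z \in last D p -> ~~ constrainedb R u ->
  ~~ between (index x s) (index u s) (index z s).
Proof.
move=> RD Dp Dx zl Cu; elim: p D x RD Dp Dx zl => [|E p IH] D x RD /=.
  move=> _ Dx Dz; apply: contraNN Cu.
  by move/(consecutive_between s_ord (c1p_consecutive s_c1p RD) Dx Dz); apply: constrained_row.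
case/andP=> DE pE Dx zl; have /and3P[_ RE /overlap_witnesses[[m DEm] _ _]] := DE.
have [Dm Em] : m \in D /\ m \in E by apply/andP; rewrite -in_setI.
have um : u != m by apply: contraNneq Cu => ->; apply: constrained_row Dm.
apply: (not_between_trans (IH E m RE pE Em zl)); last exact: index_neq s_ord um.
apply: contraNN Cu => /(consecutive_between s_ord (c1p_consecutive s_c1p RD) Dx Dm).
exact: constrained_row.
Qed.

Lemma unconstrained_not_between x z u :
  constrainedb R x -> constrainedb R z -> ~~ constrainedb R u ->
  ~~ between (index x s) (index u s) (index z s).
Proof.
move=> /constrainedP[D RD Dx] /constrainedP[E RE Ez] Cu.
have /connectP[p Dp Elast] := R_conn RD RE.
by apply: (unconstrained_not_between_path RD Dp Dx) => //; rewrite -Elast.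
Qed.

(* A row that avoids the class of x and y but meets the gap between x and y
   lies entirely in that gap, and so does every row overlap-reachable from
   it; in particular none of them contains x. *)
Lemma venn_class_path x y p D d : same_vennb R x y -> D \in R ->
  path (overlap_rel R) D p -> x \notin D -> d \in D ->
  between (index x s) (index d s) (index y s) -> x \notin last D p.
Proof.
move=> xy; elim: p D d => [|E p IH] D d RD //= /andP[DE pE] Dx Dd xdy.
have /and3P[_ RE /overlap_witnesses[[m DEm] [a a_] _]] := DE.
have [Dm Em] : m \in D /\ m \in E by apply/andP; rewrite -in_setI.
have [Ea Da] : a \notin E /\ a \in D by apply/andP; rewrite -in_setD.
have Dy : y \notin D by rewrite -(same_venn_mem xy RD).
have inside e : e \in D -> between (index x s) (index e s) (index y s).
  move=> De; have sD := c1p_consecutive s_c1p RD; apply: (between_squeeze xdy).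
  - by apply: contraNN Dx => /(consecutive_between s_ord sD De Dd).
  - by apply: contraNN Dy => /(consecutive_between s_ord sD De Dd).
  - by apply: index_neq s_ord _; apply: contraNneq Dx => <-.
  - by apply: index_neq s_ord _; apply: contraNneq Dy => <-.
apply: (IH E m RE pE _ Em (inside m Dm)); apply: contraNN Ea => Ex.
have Ey : y \in E by rewrite -(same_venn_mem xy RE).
exact: (consecutive_between s_ord (c1p_consecutive s_c1p RE) Ex Ey (inside a Da)).
Qed.

Lemma venn_class_contiguous x y w : same_vennb R x y -> constrainedb R x ->
  between (index x s) (index w s) (index y s) -> same_vennb R x w.
Proof.
move=> xy /constrainedP[E RE Ex] xwy; apply: contraT => /venn_separator[X RX xXw].
have [Xx|Xx] := boolP (x \in X).
  have Xy : y \in X by rewrite -(same_venn_mem xy RX).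
  by move: xXw; rewrite Xx (consecutive_between s_ord (c1p_consecutive s_c1p RX) Xx Xy xwy).
have Xw : w \in X by rewrite -[w \in X]negbK -xXw.
have /connectP[p Xp Elast] := R_conn RX RE.
by move: (venn_class_path xy RX Xp Xx Xw xwy); rewrite -Elast Ex.
Qed.

Lemma venn_class_side x p w : constrainedb R x -> same_vennb R p x -> ~~ same_vennb R w x ->
  (index w s < index p s) = (index w s < index x s).
Proof.
move=> Cx px wx.
have wp : w != p by apply: contraNneq wx => ->.
have wx' : w != x by apply: contraNneq wx => ->; rewrite same_venn_refl.
have xp : same_vennb R x p by rewrite same_venn_sym.
have xwp : ~~ between (index x s) (index w s) (index p s).
  by apply: contra wx => /(venn_class_contiguous xp Cx); rewrite same_venn_sym.
rewrite (ltn_anti_neq (index_neq s_ord wp)) (ltn_anti_neq (index_neq s_ord wx')).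
by rewrite (not_between_lt xwp (index_neq s_ord wx') (index_neq s_ord wp)).
Qed.

Lemma venn_class_before x p w : constrainedb R x -> same_vennb R p x ->
  ~~ same_vennb R w x -> index w s < index x s -> index w s < index p s.
Proof. by move=> Cx px wx; rewrite (venn_class_side Cx px wx). Qed.

Lemma venn_class_after x p w : constrainedb R x -> same_vennb R p x ->
  ~~ same_vennb R w x -> index x s < index w s -> index p s < index w s.
Proof.
move=> Cx px wx xw; have pw : p != w by apply: contraNneq wx => <-.
have xw' : x != w by apply: contraTneq xw => ->; rewrite ltnn.
rewrite (ltn_anti_neq (index_neq s_ord pw)) (venn_class_side Cx px wx).
by rewrite -(ltn_anti_neq (index_neq s_ord xw')).
Qed.

End OneOrdering.

Section Necessity.
Variables (C : finType) (R : {set {set C}}).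
Hypothesis R_conn : overlap_connected R.

Lemma c1p_ordering_sub (R' : {set {set C}}) t :
  R \subset R' -> c1p_ordering R' t -> c1p_ordering R t.
Proof. by move=> /subsetP RR' [tO tC]; split=> // X /RR'; apply: tC. Qed.

Lemma c1p_between_rigid s t x y z : c1p_ordering R s -> c1p_ordering R t ->
  constrainedb R x -> constrainedb R y -> constrainedb R z ->
  ~~ same_vennb R x y -> ~~ same_vennb R y z ->
  between (index x s) (index y s) (index z s) -> between (index x t) (index y t) (index z t).
Proof.
move=> s_c1p t_c1p Cx Cy Cz xy yz xyz.
have [f orient] := c1p_orientation s_c1p t_c1p R_conn.
apply: (@between_monotone (index x t < index y t)) => //; last 2 first.
- exact: venn_index_neq t_c1p.1 xy.
- exact: venn_index_neq t_c1p.1 yz.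
move: (orient y z Cy Cz yz); rewrite -(orient x y Cx Cy xy) /agree (between_lt_same xyz).
by case: (_ < _); case: (_ < _); case: (_ < _).
Qed.

Lemma venn_triple_columns s x0 h i j : column_ordering s -> venn_triple R s x0 h i j ->
  let x := nth x0 s h in let y := nth x0 s i in let z := nth x0 s j in
  [/\ [/\ constrainedb R x, constrainedb R y & constrainedb R z],
      [/\ ~~ same_vennb R x y, ~~ same_vennb R y z & ~~ same_vennb R x z]
    & between (index x s) (index y s) (index z s)].
Proof.
move=> [s_uniq _] [hi ij js [Cx Cy Cz] [xy yz xz]] x y z.
have i_s : i < size s by apply: ltn_trans js.
have h_s : h < size s by apply: ltn_trans i_s.
rewrite /x /y /z !index_uniq // /between hi ij /=.
split=> //; first by split; apply/constrainedP.
by split; apply/negP => /same_vennP.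
Qed.

Section Obstructions.
Variables (s t : seq C) (Z : {set C}).
Hypotheses (s_c1p : c1p_ordering R s) (t_c1p : c1p_ordering (Z |: R) t).

Let tR_c1p : c1p_ordering R t := c1p_ordering_sub (subsetUr _ _) t_c1p.
Let tZ : consecutive_in t Z := t_c1p.2 Z (setU11 Z R).

Lemma config101_not_c1p : ~ config101 R s Z.
Proof.
case=> x0 [h [i [j [T [Zx Zy Zz]]]]].
have [[Cx Cy Cz] [xy yz _] xyz] := venn_triple_columns s_c1p.1 T.
move: Zy; rewrite (consecutive_between t_c1p.1 tZ Zx Zz) //.
exact: c1p_between_rigid s_c1p tR_c1p Cx Cy Cz xy yz xyz.
Qed.

Lemma config010_not_c1p u : u \in Z -> unconstrained R u -> ~ config010 R s Z.
Proof.
move=> Zu /unconstrainedP Cu [x0 [h [i [j [T [Zx Zy Zz]]]]]].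
have [[Cx Cy Cz] [xy yz _] xyz] := venn_triple_columns s_c1p.1 T.
have tO := t_c1p.1.
move/negP: (unconstrained_not_between tR_c1p R_conn Cx Cz Cu); apply.
apply: (between_squeeze (c1p_between_rigid s_c1p tR_c1p Cx Cy Cz xy yz xyz)).
- by apply: contraNN Zx => /(consecutive_between tO tZ Zu Zy).
- by apply: contraNN Zz => /(consecutive_between tO tZ Zu Zy).
- by apply: index_neq tO _; apply: contraNneq Zx => <-.
- by apply: index_neq tO _; apply: contraNneq Zz => <-.
Qed.

End Obstructions.

Lemma configuration_not_c1p s Z : c1p_ordering R s ->
  config101 R s Z \/ (config010 R s Z /\ exists2 c, c \in Z & unconstrained R c) ->
  ~ has_C1P (Z |: R).
Proof.
move=> s_c1p conf [t t_c1p]; case: conf => [|[conf [u Zu Uu]]].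
  exact: config101_not_c1p s_c1p t_c1p.
by apply: (config010_not_c1p s_c1p t_c1p Zu Uu).
Qed.

End Necessity.

Section KeySort.
Variables (C : finType) (R : {set {set C}}) (s : seq C) (key : C -> nat).
Hypothesis s_c1p : c1p_ordering R s.

Definition keyed_le : rel C :=
  fun x y => (key x < key y) || ((key x == key y) && (index x s <= index y s)).

Lemma keyed_le_trans : transitive keyed_le.
Proof. rewrite /keyed_le => y x z; lia. Qed.

Lemma keyed_le_total : total keyed_le.
Proof. rewrite /keyed_le => x y; lia. Qed.

Lemma keyed_le_key x y : keyed_le x y -> key x <= key y.
Proof. rewrite /keyed_le; lia. Qed.

Lemma keyed_le_index x y : keyed_le x y -> key y <= key x -> index x s <= index y s.
Proof. rewrite /keyed_le; lia. Qed.

Lemma sort_by_key_c1p (Z : {set C}) lo hi :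
  (forall x y, constrainedb R x -> constrainedb R y -> ~~ same_vennb R x y ->
     index x s < index y s -> key x <= key y) ->
  (forall c, ~~ constrainedb R c ->
     (forall x, constrainedb R x -> key c < key x) \/
     (forall x, constrainedb R x -> key x < key c)) ->
  (forall c, (c \in Z) = (lo <= key c <= hi)) ->
  has_C1P (Z |: R).
Proof.
move=> key_mono key_outside Z_key; have [[s_uniq s_all] _] := s_c1p.
set t := sort keyed_le s; have t_uniq : uniq t by rewrite sort_uniq.
have t_sorted : sorted keyed_le t by apply: sort_sorted; apply: keyed_le_total.
exists t; split; first by split=> // c; rewrite mem_sort.
move=> X RZX x0 h i j h_i i_j j_t Xh Xj; have i_t : i < size t by apply: ltn_trans j_t.
have h_t : h < size t by apply: ltn_trans i_t.
have [le_hi le_ij] : keyed_le (nth x0 t h) (nth x0 t i) /\ keyed_le (nth x0 t i) (nth x0 t j).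
  by split; apply: (sorted_ltn_nth keyed_le_trans).
case/setU1P: RZX Xh Xj => [-> | RX] Xh Xj.
  move: Xh Xj; rewrite !Z_key => /andP[lo_h _] /andP[_ j_hi].
  by rewrite (leq_trans lo_h (keyed_le_key le_hi)) (leq_trans (keyed_le_key le_ij) j_hi).
have s_order x y : constrainedb R x -> constrainedb R y -> ~~ same_vennb R x y ->
    x != y -> keyed_le x y -> index x s < index y s.
  move=> Cx Cy xy x_y le_xy; rewrite ltn_neqAle (index_neq s_c1p.1 x_y) /=.
  rewrite leqNgt; apply/negP => yx; rewrite same_venn_sym in xy.
  by have := keyed_le_index le_xy (key_mono y x Cy Cx xy yx); rewrite leqNgt yx.
have [Ch Cj] := conj (constrained_row RX Xh) (constrained_row RX Xj).
have [Ci|Ci] := boolP (constrainedb R (nth x0 t i)); last first.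
  case: (key_outside _ Ci) => [/(_ _ Ch)|/(_ _ Cj)].
    by rewrite ltnNge (keyed_le_key le_hi).
  by rewrite ltnNge (keyed_le_key le_ij).
have [hi_same|hi_diff] := boolP (same_vennb R (nth x0 t h) (nth x0 t i)).
  by rewrite -(same_venn_mem hi_same RX).
have [ij_same|ij_diff] := boolP (same_vennb R (nth x0 t i) (nth x0 t j)).
  by rewrite (same_venn_mem ij_same RX).
have ne_hi : nth x0 t h != nth x0 t i by rewrite nth_uniq // neq_ltn h_i.
have ne_ij : nth x0 t i != nth x0 t j by rewrite nth_uniq // neq_ltn i_j.
apply: (consecutive_between s_c1p.1 (c1p_consecutive s_c1p RX) Xh Xj).
by rewrite /between (s_order _ _ Ch Ci hi_diff ne_hi le_hi) (s_order _ _ Ci Cj ij_diff ne_ij le_ij).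
Qed.

End KeySort.

Definition zone (a b p : nat) : nat := if p < a then 1 else if p < b then 5 else 9.

Lemma zone_mono a b p q : p <= q -> zone a b p <= zone a b q.
Proof.
by rewrite /zone; case: (ltnP p a); case: (ltnP q a); case: (ltnP p b); case: (ltnP q b); lia.
Qed.

Section Sufficiency.
Variables (C : finType) (R : {set {set C}}) (s : seq C) (Z : {set C}).
Hypothesis s_c1p : c1p_ordering R s.

Local Notation constr := (constrainedb R).
Local Notation same := (same_vennb R).
Local Notation pos c := (index c s).

Let s_ord : column_ordering s := s_c1p.1.

Lemma venn_triple_index x y z : constr x -> constr y -> constr z ->
  ~~ same x y -> ~~ same y z -> ~~ same x z -> pos x < pos y -> pos y < pos z ->
  venn_triple R s x (pos x) (pos y) (pos z).
Proof.
have [_ s_all] := s_ord; move=> Cx Cy Cz xy yz xz xy_ yz_.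
split=> //; first by rewrite index_mem.
  by rewrite !nth_index //; split; apply/constrainedP.
rewrite !nth_index //.
by split=> /same_vennP E; [rewrite E in xy | rewrite E in yz | rewrite E in xz].
Qed.

Lemma config101_of x y z : constr x -> constr y -> constr z ->
  ~~ same x y -> ~~ same y z -> ~~ same x z -> pos x < pos y -> pos y < pos z ->
  x \in Z -> y \notin Z -> z \in Z -> config101 R s Z.
Proof.
have [_ s_all] := s_ord; move=> Cx Cy Cz xy yz xz xy_ yz_ Zx Zy Zz.
exists x, (pos x), (pos y), (pos z); rewrite !nth_index //.
by split=> //; apply: venn_triple_index.
Qed.

Lemma config010_of x y z : constr x -> constr y -> constr z ->
  ~~ same x y -> ~~ same y z -> ~~ same x z -> pos x < pos y -> pos y < pos z ->
  x \notin Z -> y \in Z -> z \notin Z -> config010 R s Z.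
Proof.
have [_ s_all] := s_ord; move=> Cx Cy Cz xy yz xz xy_ yz_ Zx Zy Zz.
exists x, (pos x), (pos y), (pos z); rewrite !nth_index //.
by split=> //; apply: venn_triple_index.
Qed.

Lemma unconstrained_row_c1p : (forall c, c \in Z -> ~~ constr c) -> has_C1P (Z |: R).
Proof.
move=> Z_free.
pose key c := if constr c then 1 else if c \in Z then 2 else 0.
apply: (@sort_by_key_c1p _ R s key s_c1p Z 2 2).
- by move=> x y Cx Cy; rewrite /key Cx Cy.
- move=> c Cc; rewrite /key (negbTE Cc).
  by case: (c \in Z); [right | left] => x ->.
- move=> c; rewrite /key; have [Zc|Zc] := boolP (c \in Z); first by rewrite (negbTE (Z_free c Zc)).
  by case: (constr c).
Qed.

Section BoundedRow.
Hypotheses (R_conn : overlap_connected R) (no101 : ~ config101 R s Z)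
  (no010 : ~ (config010 R s Z /\ exists2 c, c \in Z & unconstrained R c)).
Variables a b : C.
Hypotheses (Za : a \in Z) (Ca : constr a) (Zb : b \in Z) (Cb : constr b).
Hypothesis a_first : forall c, c \in Z -> constr c -> pos a <= pos c.
Hypothesis b_last : forall c, c \in Z -> constr c -> pos c <= pos b.

Lemma a_le_b : pos a <= pos b.
Proof. exact: a_first Zb Cb. Qed.

Lemma a_lt_b : ~~ same a b -> pos a < pos b.
Proof.
by move=> ab; rewrite ltn_neqAle a_le_b andbT (venn_index_neq s_ord ab).
Qed.

Lemma class_b_after_a q : same q b -> ~~ same q a -> pos a < pos q.
Proof.
move=> qb qa; have ab : ~~ same a b by apply: contraNN qa => /(same_venn_join qb).
exact: (venn_class_before s_c1p R_conn Cb qb ab (a_lt_b ab)).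
Qed.

Lemma class_a_before_b p : same p a -> ~~ same p b -> pos p < pos b.
Proof.
move=> pa pb; have ba : ~~ same b a by apply: contraNN pb => ba; apply: same_venn_join pa ba.
by apply: (venn_class_after s_c1p R_conn Ca pa ba); rewrite a_lt_b // same_venn_sym.
Qed.

(* A constrained column strictly between a and b, of another class, is in Z:
   otherwise a, it and b would form a 1-0-1 configuration. *)
Lemma middle_in_Z c : constr c -> ~~ same c a -> ~~ same c b ->
  pos a < pos c -> pos c < pos b -> c \in Z.
Proof.
move=> Cc ca cb ac cb_; apply: contraT => Zc; case: no101.
have ab : ~~ same a b.
  apply: contra ca => ab; rewrite same_venn_sym.
  by apply: (venn_class_contiguous s_c1p R_conn ab Ca); rewrite /between ac cb_.
by apply: (config101_of Ca Cc Cb) => //; rewrite same_venn_sym.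
Qed.

Lemma Z_strictly_inside c : c \in Z -> constr c -> ~~ same c a -> ~~ same c b ->
  pos a < pos c < pos b.
Proof.
move=> Zc Cc ca cb; rewrite !ltn_neqAle a_first // b_last // !andbT.
by rewrite (venn_index_neq s_ord cb) eq_sym (venn_index_neq s_ord ca).
Qed.

(* A constrained column that must stay to the right of the constrained
   columns of Z. *)
Definition right_of_Z (c : C) : bool :=
  [&& constr c, ~~ same c a & if same c b then c \notin Z else pos b < pos c].

(* The unconstrained columns of Z are put before its constrained columns
   exactly when there are some and the right side is blocked. *)
Definition Z_left : bool :=
  [exists c, (c \in Z) && ~~ constr c] && [exists c, right_of_Z c].

Lemma Z_left_no010 : Z_left -> config010 R s Z -> False.
Proof.
case/andP=> /existsP[u /andP[Zu Cu]] _ c010; apply: no010; split=> //.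
by exists u => //; apply/unconstrainedP.
Qed.

Lemma lt_a_notin_Z x : constr x -> pos x < pos a -> x \notin Z.
Proof. by move=> Cx; apply: contraTN => Zx; rewrite -leqNgt a_first. Qed.

Lemma gt_b_notin_Z x : constr x -> pos b < pos x -> x \notin Z.
Proof. by move=> Cx; apply: contraTN => Zx; rewrite -leqNgt b_last. Qed.

(* When Z_left holds, no constrained column lies before the class of a:
   such a column, a, and a blocking column on the right would form a 0-1-0
   configuration. *)
Lemma Z_left_nothing_before x : Z_left -> constr x -> ~~ same x a -> ~~ same x b ->
  pos x < pos a -> False.
Proof.
move=> zl Cx xa xb xa_; apply: (Z_left_no010 zl).
have Zx := lt_a_notin_Z Cx xa_; have ax : ~~ same a x by rewrite same_venn_sym.
case/andP: zl => _ /existsP[z /and3P[Cz za]].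
have az : ~~ same a z by rewrite same_venn_sym.
have [zb Zz|zb bz] := boolP (same z b).
  have xz : ~~ same x z by apply: contraNN xb => xz; apply: same_venn_trans xz zb.
  exact: (config010_of Cx Ca Cz xa az xz xa_ (class_b_after_a zb za) Zx Za Zz).
have az_ : pos a < pos z by apply: leq_ltn_trans a_le_b bz.
have xz : ~~ same x z.
  apply: contra xa => xz; apply: (venn_class_contiguous s_c1p R_conn xz Cx).
  by rewrite /between xa_ az_.
exact: (config010_of Cx Ca Cz xa az xz xa_ az_ Zx Za (gt_b_notin_Z Cz bz)).
Qed.

(* When Z_left holds, a column of the class of a outside Z forces a and b into
   the same class: otherwise a third class yields a 0-1-0 configuration. *)
Lemma Z_left_class_a x : Z_left -> same x a -> x \notin Z -> same a b.
Proof.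
move=> zl xa Zx; apply: contraT => ab; exfalso; apply: (Z_left_no010 zl).
have Cx := same_venn_constrained xa Ca.
have xb : ~~ same x b.
  by apply: contraNN ab => xb; rewrite same_venn_sym in xa; apply: same_venn_trans xa xb.
have ba : ~~ same b a by rewrite same_venn_sym.
have xb_ := class_a_before_b xa xb.
have away w : ~~ same w a -> ~~ same x w.
  by move=> wa; apply: contraNN wa => xw; rewrite same_venn_sym in xw; apply: same_venn_trans xw xa.
case/andP: (zl) => _ /existsP[z /and3P[Cz za]].
have [zb Zz|zb bz] := boolP (same z b); last first.
  have bz' : ~~ same b z by rewrite same_venn_sym.
  exact: (config010_of Cx Cb Cz xb bz' (away z za) xb_ bz Zx Zb (gt_b_notin_Z Cz bz)).
have [w [Cw wa wb]] := third_venn_class R_conn Ca Cb ab.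
have [wa_|aw] := ltnP (pos w) (pos a); first by case: (Z_left_nothing_before zl Cw wa wb wa_).
have aw_ : pos a < pos w by rewrite ltn_neqAle aw andbT eq_sym (venn_index_neq s_ord wa).
have [wb_|bw] := ltnP (pos w) (pos b).
  have wz : ~~ same w z by apply: contraNN wb => wz; apply: same_venn_trans wz zb.
  have xw_ := venn_class_after s_c1p R_conn Ca xa wa aw_.
  have wz_ := venn_class_before s_c1p R_conn Cb zb wb wb_.
  have Zw := middle_in_Z Cw wa wb aw_ wb_.
  exact: (config010_of Cx Cw Cz (away w wa) wz (away z za) xw_ wz_ Zx Zw Zz).
have bw_ : pos b < pos w by rewrite ltn_neqAle bw andbT eq_sym (venn_index_neq s_ord wb).
have bw' : ~~ same b w by rewrite same_venn_sym.
exact: (config010_of Cx Cb Cw xb bw' (away w wa) xb_ bw_ Zx Zb (gt_b_notin_Z Cw bw_)).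
Qed.

(* Unconstrained columns outside Z
   come first (0); constrained columns follow in the order of s, grouped as:
   before a (1), class of a outside Z (2, or 8 when Z_left), class of a in Z
   (4), between a and b (5), class of b in Z (6), class of b outside Z (8),
   after b (9).  Unconstrained columns of Z get 3 or 7, next to the
   constrained part of Z. *)
Definition zkey (c : C) : nat :=
  if ~~ constr c then (if c \in Z then (if Z_left then 3 else 7) else 0)
  else if same c a then (if c \in Z then 4 else if Z_left then 8 else 2)
  else if same c b then (if c \in Z then 6 else 8)
  else zone (pos a) (pos b) (pos c).

Lemma zkey_constrained x : constr x -> 1 <= zkey x <= 9.
Proof. by move=> Cx; rewrite /zkey /zone Cx /=; repeat case: ifP. Qed.

Lemma zkey_Z_left x : Z_left -> constr x -> 4 <= zkey x.
Proof.
move=> zl Cx; rewrite /zkey /zone Cx zl /=.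
have [xa|xa] := boolP (same x a); first by case: ifP.
have [xb|xb] := boolP (same x b); first by case: ifP.
case: ifP => [xa_|_]; last by case: ifP.
by case: (Z_left_nothing_before zl Cx xa xb xa_).
Qed.

Lemma zkey_not_Z_left c y : ~~ Z_left -> c \in Z -> ~~ constr c -> constr y -> zkey y <= 6.
Proof.
move=> nzl Zc Cc Cy; have Ry : ~~ right_of_Z y.
  apply: contraNN nzl => Ry; apply/andP; split; apply/existsP; last by exists y.
  by exists c; rewrite Zc Cc.
move: Ry; rewrite /right_of_Z /zkey /zone Cy /=.
have [ya|ya] := boolP (same y a); first by rewrite (negbTE nzl); case: (y \in Z).
have [yb|yb] := boolP (same y b); first by rewrite /= negbK => ->.
rewrite /= -leqNgt => y_b; case: ifP => // _; case: ifP => // /negbT; rewrite -leqNgt => b_y.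
by move: (venn_index_neq s_ord yb); rewrite eqn_leq y_b b_y.
Qed.

Lemma Z_zkey c :
  (c \in Z) = ((if Z_left then 3 else 4) <= zkey c <= (if Z_left then 6 else 7)).
Proof.
rewrite /zkey; have [Cc|Cc] := boolP (constr c); last by case: (c \in Z); case: Z_left.
have [ca|ca] := boolP (same c a); first by case: (c \in Z); case: Z_left.
have [cb|cb] := boolP (same c b); first by case: (c \in Z); case: Z_left.
have [Zc|Zc] := boolP (c \in Z).
  have /andP[ac cb_] := Z_strictly_inside Zc Cc ca cb.
  by rewrite /zone (ltnNge (pos c) (pos a)) (ltnW ac) cb_; case: Z_left.
rewrite /zone; case: (ltnP (pos c) (pos a)) => [|a_c]; first by case: Z_left.
have ac : pos a < pos c.
  by rewrite ltn_neqAle a_c andbT eq_sym (venn_index_neq s_ord ca).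
case: (ltnP (pos c) (pos b)) => [cb_|]; last by case: Z_left.
by rewrite (middle_in_Z Cc ca cb ac cb_) in Zc.
Qed.

Lemma zkey_mono x y : constr x -> constr y -> ~~ same x y -> pos x < pos y ->
  zkey x <= zkey y.
Proof.
move=> Cx Cy xy xy_; rewrite /zkey Cx Cy /=.
have yx : ~~ same y x by rewrite same_venn_sym.
have [xa|xa] := boolP (same x a); have [ya|ya] := boolP (same y a).
- by case/negP: xy; apply: same_venn_join xa ya.
-
  have ay : pos a < pos y.
    by apply: (venn_class_after s_c1p R_conn Cx _ yx xy_); rewrite same_venn_sym.
  rewrite /zone (ltnNge (pos y) (pos a)) (ltnW ay) /=.
  case: ifP => Zx; first by repeat case: ifP.
  case: ifP => zl; last by repeat case: ifP.
  (* x lies outside Z, so a and b share their class and y lies after it *)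
  have ab := Z_left_class_a zl xa (negbT Zx).
  have yb : ~~ same y b.
    by apply: contraNN ya => yb; apply: same_venn_trans yb _; rewrite same_venn_sym.
  rewrite (negbTE yb); case: ifP => // yb_; case/negP: ya; rewrite same_venn_sym.
  by apply: (venn_class_contiguous s_c1p R_conn ab Ca); rewrite /between ay yb_.
-
  have xa_ : pos x < pos a.
    by apply: (venn_class_before s_c1p R_conn Cy _ xy xy_); rewrite same_venn_sym.
  have [xb|xb] := boolP (same x b).
    by have := class_b_after_a xb xa; rewrite ltnNge (ltnW xa_).
  by rewrite /zone xa_; repeat case: ifP.
have [xb|xb] := boolP (same x b); have [yb|yb] := boolP (same y b).
- by case/negP: xy; apply: same_venn_join xb yb.
-
  have ay := ltn_trans (class_b_after_a xb xa) xy_.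
  have by_ : pos b < pos y.
    by apply: (venn_class_after s_c1p R_conn Cx _ yx xy_); rewrite same_venn_sym.
  rewrite /zone (ltnNge (pos y) (pos a)) (ltnW ay) (ltnNge (pos y) (pos b)) (ltnW by_).
  by case: ifP.
-
  have xb_ : pos x < pos b.
    by apply: (venn_class_before s_c1p R_conn Cy _ xy xy_); rewrite same_venn_sym.
  by rewrite /zone xb_; repeat case: ifP.
exact/zone_mono/ltnW.
Qed.

Lemma bounded_row_c1p : has_C1P (Z |: R).
Proof.
apply: (@sort_by_key_c1p _ R s zkey s_c1p Z _ _ zkey_mono _ Z_zkey) => c Cc.
have [Zc|Zc] := boolP (c \in Z); last first.
  by left=> x Cx; have /andP[k1 _] := zkey_constrained Cx; rewrite /zkey (negbTE Cc) (negbTE Zc).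
have [zl|nzl] := boolP Z_left.
  by left=> x Cx; have := zkey_Z_left zl Cx; rewrite /zkey (negbTE Cc) Zc zl.
by right=> x Cx; have := zkey_not_Z_left nzl Zc Cc Cx; rewrite /zkey (negbTE Cc) Zc (negbTE nzl).
Qed.

End BoundedRow.

Lemma no_configuration_c1p : overlap_connected R -> ~ config101 R s Z ->
  ~ (config010 R s Z /\ exists2 c, c \in Z & unconstrained R c) -> has_C1P (Z |: R).
Proof.
move=> R_conn no101 no010.
have [/existsP[c0 Zc0]|noC] := boolP [exists c, (c \in Z) && constr c]; last first.
  apply: unconstrained_row_c1p => c Zc; apply: contraNN noC => Cc.
  by apply/existsP; exists c; rewrite Zc.
pose P c := (c \in Z) && constr c.
have [a /andP[Za Ca] a_first] := @arg_minnP _ c0 P (fun c => index c s) Zc0.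
have [b /andP[Zb Cb] b_last] := @arg_maxnP _ c0 P (fun c => index c s) Zc0.
apply: (bounded_row_c1p R_conn no101 no010 Za Ca Zb Cb).
- by move=> c Zc Cc; apply: a_first; rewrite /P Zc.
- by move=> c Zc Cc; apply: b_last; rewrite /P Zc.
Qed.

End Sufficiency.

Theorem mainTheorem8 (C : finType) (RQ : {set {set C}}) (s : seq C) (Z : {set C}) :
  RQ != set0 ->
  has_C1P RQ ->
  overlap_connected RQ ->
  c1p_ordering RQ s ->
  Z \notin RQ ->
  (~ has_C1P (Z |: RQ) <->
   config101 RQ s Z \/
   (config010 RQ s Z /\ exists2 c, c \in Z & unconstrained RQ c)).
Proof.
move=> _ _ R_conn s_c1p _; split; last exact: (configuration_not_c1p R_conn s_c1p).
move=> not_c1p; apply: NNPP => no_conf; apply: not_c1p.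
by apply: (no_configuration_c1p s_c1p R_conn) => conf; apply: no_conf; [left | right].
Qed.
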